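(* Let $\Gamma$ be a graph, possibly with some 2-fold edges. Then $\Gamma$ is the family diagram of at most one family of spherical simplices whose dihedral angles lie in $\{\frac{\pi}{2},\frac{\pi}{3},\frac{2\pi}{3},\frac{\pi}{4},\frac{3\pi}{4}\}$ (families considered up to isometry).
   Context: A spherical simplex in $S^n\subset\mathbb{R}^{n+1}$ is given by unit outer normals $f_1,\dots,f_{n+1}$ to its facets; the hyperplanes $f_i^\perp$ cut $S^n$ into $2^{n+1}$ simplices encoded by $\pm f_1,\dots,\pm f_{n+1}$, called a family. For a simplex whose dihedral angles are of the form $\pi/k$ or $\pi(k-1)/k$, its family diagram is the graph with vertices $v_i$ corresponding to the $f_i$, where $v_i$ and $v_j$ are joined by a $(k-2)$-fold edge if the angle between $f_i,f_j$ is $\pi/k$ or $\pi(k-1)/k$, and are not joined if $f_i\perp f_j$. All simplices of a family have the same family diagram. *)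

From HB Require Import structures.
From mathcomp Require Import all_boot all_order all_algebra.
From mathcomp Require Import all_classical all_reals all_analysis.
Set Implicit Arguments. Unset Strict Implicit. Unset Printing Implicit Defensive.
Import Order.TTheory GRing.Theory Num.Theory.
Local Open Scope ring_scope.

Definition dotp {R : realType} {m : nat} (u v : 'rV[R]_m) : R := (u *m v^T) 0 0.

(* A spherical simplex in S^n, given by its unit outer facet normals
   f_0, ..., f_n in R^(n+1); they must be unit vectors and linearly
   independent. The family is {±f_i}. *)
Definition simplex_normals {R : realType} (n : nat)
  (f : 'I_n.+1 -> 'rV[R]_n.+1) : Prop :=
  (forall i, dotp (f i) (f i) = 1) /\ row_free (\matrix_(i < n.+1) f i).

Definition dihedral {R : realType} (n : nat) (f : 'I_n.+1 -> 'rV[R]_n.+1)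
  (i j : 'I_n.+1) : R := pi - acos (dotp (f i) (f j)).

Definition admissible_angles {R : realType} (n : nat)
  (f : 'I_n.+1 -> 'rV[R]_n.+1) : Prop :=
  forall i j : 'I_n.+1, i != j ->
    let t := dihedral f i j in
    t = pi / 2 \/ t = pi / 3 \/ t = 2 * pi / 3 \/ t = pi / 4 \/ t = 3 * pi / 4.

(* Gamma (edge multiplicities between vertices v_i, v_j) is the family diagram
   of the simplex with normals f: v_i, v_j are joined by a (k-2)-fold edge
   iff the angle is pi/k or pi(k-1)/k (k = 2: not joined). *)
Definition is_family_diagram {R : realType} (n : nat)
  (f : 'I_n.+1 -> 'rV[R]_n.+1) (Gamma : 'I_n.+1 -> 'I_n.+1 -> nat) : Prop :=
  forall i j : 'I_n.+1, i != j ->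
    exists k : nat, (2 <= k)%N /\
      (dihedral f i j = pi / k%:R \/ dihedral f i j = pi * (k.-1)%:R / k%:R) /\
      Gamma i j = (k - 2)%N.

From HB Require Import structures.
From mathcomp Require Import all_boot all_order all_algebra.
From mathcomp Require Import all_classical all_reals all_analysis.
From mathcomp Require Import ring lra zify.
Set Implicit Arguments. Unset Strict Implicit. Unset Printing Implicit Defensive.
Import Order.TTheory GRing.Theory Num.Theory.
Local Open Scope ring_scope.

(* Let A = (f_i.f_j) and B = (g_i.g_j) be the Gram matrices of the two sets of
   normals.  Both are positive definite with unit diagonal, a common diagram gives
   |A_ij| = |B_ij|, and the admissible angles force |A_ij| >= 1/2 whenever
   A_ij != 0.  It suffices to find signs eps_i with A_ij = eps_i eps_j B_ij: then
   F^-1 D G, with F, G the matrices of normals and D = diag eps, is orthogonal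
   and sends f_i to eps_i g_i.  Such signs exist iff the ratios A_ij / B_ij
   multiply to 1 around every closed walk of the graph A_ij != 0, and cutting
   walks at repeated vertices and at chords reduces this to induced cycles.  If
   the ratios multiply to -1 around an induced cycle of length L >= 3, then the
   product of the signs of the cycle entries is (-1)^L for A or for B, say for
   M; choosing y_s = +-1 with y_s y_(s+1) M_(s,s+1) = -|M_(s,s+1)| all around
   the cycle gives y M y^T = L - 2 sum |M_(s,s+1)| <= 0, a contradiction. *)

Lemma ordS_val n (i : 'I_n) : (ordS i : nat) = if i.+1 == n then 0%N else i.+1.
Proof.
rewrite /=; case: eqP => [->|ne]; first exact: modnn.
by rewrite modn_small // ltn_neqAle ltn_ord andbT; apply/eqP.
Qed.

Lemma ordS_neq n (i : 'I_n) : (1 < n)%N -> ordS i != i.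
Proof.
move=> n_gt1; have := ltn_ord i; rewrite -(inj_eq (@ord_inj _)) ordS_val.
by case: ifP => [/eqP|/negbT/eqP]; lia.
Qed.

Lemma ordS2_neq n (i : 'I_n) : (2 < n)%N -> ordS (ordS i) != i.
Proof.
move=> n_gt2; have := ltn_ord i.
rewrite -(inj_eq (@ord_inj _)) !ordS_val.
by do 2 case: ifP => [/eqP|/negbT/eqP]; lia.
Qed.

Lemma nth_rcons_ordS (T : Type) (x : T) p (s : 'I_(size (x :: p))) :
  nth x (rcons p x) s = nth x (x :: p) (ordS s).
Proof.
rewrite ordS_val nth_rcons /= eqSS; have := ltn_ord s; rewrite /= ltnS leq_eqVlt.
by case/orP => [/eqP ->|lt_s]; rewrite ?ltnn ?eqxx // lt_s ltn_eqF.
Qed.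

Lemma rot_split (T : Type) (x : T) c s t : (s < t)%N -> (t < size c)%N ->
  exists p q, rot s c = nth x c s :: p ++ nth x c t :: q /\ size p = (t - s.+1)%N.
Proof.
move=> lt_st lt_tc; set p := take (t - s.+1) (drop s.+1 c).
have drop_s : drop s.+1 c = p ++ nth x c t :: drop t.+1 c.
  by rewrite -[LHS](cat_take_drop (t - s.+1)) drop_drop subnK // (drop_nth x lt_tc).
exists p, (drop t.+1 c ++ take s c); split; last by rewrite size_takel // size_drop; lia.
by rewrite /rot (drop_nth x) ?(ltn_trans lt_st) // drop_s /= -catA.
Qed.

Section SignedWalks.

Variables (R : comRingType) (T : Type) (sigma : T -> T -> R).
Hypotheses (sigma_sym : forall x y, sigma x y = sigma y x)
           (sigma_sqr : forall x y, sigma x y ^+ 2 = 1).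

Fixpoint walk_sign (x : T) (p : seq T) : R :=
  if p is y :: p' then sigma x y * walk_sign y p' else 1.

Definition cycle_sign (c : seq T) : R :=
  if c is x :: p then walk_sign x (rcons p x) else 1.

Lemma walk_sign_cat x p q :
  walk_sign x (p ++ q) = walk_sign x p * walk_sign (last x p) q.
Proof. by elim: p x => [|y p IH] x /=; rewrite ?mul1r // IH mulrA. Qed.

Lemma walk_sign_rcons x p y :
  walk_sign x (rcons p y) = walk_sign x p * sigma (last x p) y.
Proof. by rewrite -cats1 walk_sign_cat /= mulr1. Qed.

Lemma walk_sign_sqr x p : walk_sign x p ^+ 2 = 1.
Proof. by elim: p x => [|y p IH] x /=; rewrite ?expr1n // exprMn sigma_sqr IH mulr1. Qed.

Lemma walk_sign_rev x p : walk_sign (last x p) (rev (belast x p)) = walk_sign x p.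
Proof.
elim: p x => [|y p IH] x //=; rewrite rev_cons walk_sign_rcons IH mulrC sigma_sym.
by case: p {IH} => [|z p] //=; rewrite rev_cons last_rcons.
Qed.

Lemma walk_sign_nth x p :
  walk_sign x p = \prod_(i < size p) sigma (nth x (x :: p) i) (nth x p i).
Proof.
elim: p x => [|y p IH] x /=; first by rewrite big_ord0.
rewrite big_ord_recl IH; congr (_ * _); apply: eq_bigr => i _ /=.
by rewrite !(set_nth_default y x) // /= add0n // ltnS ltnW.
Qed.

Lemma cycle_sign_catC p q : cycle_sign (p ++ q) = cycle_sign (q ++ p).
Proof.
case: p => [|x p]; first by rewrite cats0.
case: q => [|y q]; first by rewrite cats0.
rewrite /= !rcons_cat /= -(cat_rcons y) -(cat_rcons x) !walk_sign_cat !last_rcons.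
exact: mulrC.
Qed.

Lemma cycle_sign_rot n c : cycle_sign (rot n c) = cycle_sign c.
Proof. by rewrite /rot cycle_sign_catC cat_take_drop. Qed.

Lemma cycle_sign_nth x p : cycle_sign (x :: p) =
  \prod_(s < size (x :: p)) sigma (nth x (x :: p) s) (nth x (x :: p) (ordS s)).
Proof.
rewrite /= walk_sign_nth size_rcons; apply: eq_bigr => s _.
by rewrite -rcons_cons nth_rcons ltn_ord (nth_rcons_ordS s).
Qed.

Lemma cycle_sign_cat_dup y p q :
  cycle_sign (y :: p ++ y :: q) = cycle_sign (y :: p) * cycle_sign (y :: q).
Proof. by rewrite /= rcons_cat /= -cat_rcons walk_sign_cat last_rcons. Qed.

Lemma cycle_sign_cat_chord y z p q : cycle_sign (y :: p ++ z :: q) =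
  cycle_sign (y :: rcons p z) * cycle_sign (z :: rcons q y).
Proof.
rewrite /= rcons_cat /= -cat_rcons walk_sign_cat !walk_sign_rcons !last_rcons.
by rewrite [sigma z y]sigma_sym -[LHS]mulr1 -(sigma_sqr y z); ring.
Qed.

End SignedWalks.

Section Balance.

Variables (R : comRingType) (T : finType) (e : rel T) (sigma : T -> T -> R).
Hypotheses (e_sym : symmetric e) (e_irr : irreflexive e).
Hypotheses (sigma_sym : forall x y, sigma x y = sigma y x)
           (sigma_sqr : forall x y, sigma x y ^+ 2 = 1).

Definition induced_cycle L (v : 'I_L -> T) :=
  injective v /\ forall s t, e (v s) (v t) = (t == ordS s) || (s == ordS t).

Definition cycle_splits c := exists c1 c2,
  [/\ cycle e c1, cycle e c2, (size c1 < size c)%N, (size c2 < size c)%N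
    & cycle_sign sigma c = cycle_sign sigma c1 * cycle_sign sigma c2].

Definition chord x p (s t : 'I_(size (x :: p))) :=
  [&& e (nth x (x :: p) s) (nth x (x :: p) t), t != ordS s & s != ordS t].

Lemma cycle_nth x p (s : 'I_(size (x :: p))) : cycle e (x :: p) ->
  e (nth x (x :: p) s) (nth x (x :: p) (ordS s)).
Proof.
move=> /(pathP x)/(_ s); rewrite size_rcons -nth_rcons_ordS -rcons_cons nth_rcons.
by rewrite ltn_ord; apply.
Qed.

Lemma cycle_splits_dup c : cycle e c -> ~~ uniq c -> cycle_splits c.
Proof.
case: c => [|x p] // c_cyc /(uniqPn x)[s [t [lt_st lt_t c_st]]].
have [q1 [q2 [rot_c _]]] := rot_split x lt_st lt_t.
exists (nth x (x :: p) t :: q1), (nth x (x :: p) t :: q2).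
rewrite -(cycle_sign_rot _ s) -(size_rot s (x :: p)) rot_c c_st.
rewrite cycle_sign_cat_dup /= size_cat /=.
move: c_cyc; rewrite -(rot_cycle s) rot_c c_st /= rcons_cat /= -cat_rcons cat_path.
by rewrite last_rcons => /andP[cyc1 cyc2]; split=> //; lia.
Qed.

Lemma cycle_splits_chord x p (s t : 'I_(size (x :: p))) :
  cycle e (x :: p) -> chord s t -> cycle_splits (x :: p).
Proof.
wlog lt_st : s t / (s < t)%N => [wlog_lt c_cyc chord_st|c_cyc /and3P[e_st neq_ts neq_st]].
  have [lt_st|lt_ts|eq_st] := ltngtP s t; first exact: (wlog_lt s t).
    by apply: (wlog_lt t s) => //; move: chord_st; rewrite /chord e_sym => /and3P[-> -> ->].
  by case/andP: chord_st; rewrite (val_inj eq_st) e_irr.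
have [q1 [q2 [rot_c size_q1]]] := rot_split x lt_st (ltn_ord t).
set y := nth x (x :: p) s in rot_c e_st *; set z := nth x (x :: p) t in rot_c e_st *.
have size_c : (size p).+1 = (size q1 + size q2).+2.
  by rewrite -[(size p).+1](size_rot s (x :: p)) rot_c /= size_cat /= addnS.
have [q1_gt0 q2_gt0] : (0 < size q1)%N /\ (0 < size q2)%N.
  have := ltn_ord t; have size_xp : size (x :: p) = (size p).+1 by [].
  move: neq_ts neq_st; rewrite -!(inj_eq (@ord_inj _)) !ordS_val.
  by do 2 case: ifP; lia.
exists (y :: rcons q1 z), (z :: rcons q2 y).
rewrite -(cycle_sign_rot _ s) rot_c (cycle_sign_cat_chord sigma_sym sigma_sqr).
move: c_cyc; rewrite -(rot_cycle s) rot_c /= rcons_cat /= -cat_rcons cat_path last_rcons.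
case/andP=> cyc1 cyc2; rewrite /= !size_rcons; split=> //; try lia.
- by rewrite rcons_path cyc1 last_rcons e_sym.
- by rewrite rcons_path cyc2 last_rcons.
Qed.

Lemma chordless_induced_cycle x p : uniq (x :: p) -> cycle e (x :: p) ->
  (forall s t : 'I_(size (x :: p)), ~~ chord s t) ->
  induced_cycle (fun s : 'I_(size (x :: p)) => nth x (x :: p) s).
Proof.
move=> c_uniq c_cyc no_chord; split=> [s t /eqP|s t].
  by rewrite nth_uniq // => /eqP/val_inj.
apply/idP/idP => [e_st | /orP[] /eqP ->].
- by move: (no_chord s t); rewrite /chord e_st /= negb_and !negbK.
- exact: cycle_nth.
- by rewrite e_sym; apply: cycle_nth.
Qed.

Hypothesis induced_cycle_sign :
  forall L (v : 'I_L -> T), (2 < L)%N -> induced_cycle v ->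
  \prod_s sigma (v s) (v (ordS s)) = 1.

Lemma cycle_sign_eq1 c : cycle e c -> cycle_sign sigma c = 1.
Proof.
have [n] := ubnP (size c); elim: n c => // n IH c /ltnSE le_c_n c_cyc.
have splits_eq1 : cycle_splits c -> cycle_sign sigma c = 1.
  case=> c1 [c2 [cyc1 cyc2 lt1 lt2 ->]].
  by rewrite !IH ?mulr1 // (leq_trans _ le_c_n).
case: c le_c_n c_cyc splits_eq1 => [|x [|y [|z p]]] // _ c_cyc splits_eq1.
- by move: c_cyc; rewrite /= e_irr.
- by rewrite /= mulr1 [sigma y x]sigma_sym -expr2 sigma_sqr.
set c := [:: x, y, z & p] in c_cyc splits_eq1 *.
have [c_uniq|/(cycle_splits_dup c_cyc)/splits_eq1//] := boolP (uniq c).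
have [/existsP[s /existsP[t /(cycle_splits_chord c_cyc)/splits_eq1//]]|] :=
  boolP [exists s : 'I_(size c), exists t, chord s t].
rewrite negb_exists => /forallP no_chord.
rewrite (cycle_sign_nth sigma x); apply: induced_cycle_sign => //.
apply: chordless_induced_cycle => // s t.
by move: (no_chord s); rewrite negb_exists => /forallP.
Qed.

Lemma balanced_switching : exists eps : T -> R,
  (forall x, eps x ^+ 2 = 1) /\ forall x y, e x y -> sigma x y = eps x * eps y.
Proof.
have e_csym := sym_connect_sym e_sym.
have root_path x : exists p, path e (fingraph.root e x) p /\ last (fingraph.root e x) p = x.
  have /connectP[p] : connect e (fingraph.root e x) x by rewrite e_csym connect_root.
  by exists p.
have [p pP] := fin_all_exists root_path.
exists (fun x => walk_sign sigma (fingraph.root e x) (p x)).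
split=> [x|x y e_xy]; first exact: walk_sign_sqr.
have r_xy : fingraph.root e x = fingraph.root e y by apply/(fingraph.rootP e_csym)/connect1.
move: (pP x) (pP y); rewrite r_xy; set r := fingraph.root e y.
move=> [px_path px_last] [py_path py_last].
have r_py : r :: p y = rcons (belast r (p y)) y by rewrite lastI py_last.
have c_cyc : cycle e (r :: p x ++ rev (p y)).
  rewrite /= rcons_cat cat_path px_path px_last -rev_cons r_py rev_rcons /= e_xy.
  by rewrite -{1}py_last rev_path (eq_path (e' := e)).
have := cycle_sign_eq1 c_cyc.
rewrite /= rcons_cat walk_sign_cat px_last -rev_cons r_py rev_rcons /=.
rewrite -[X in walk_sign _ X (rev _)]py_last (walk_sign_rev sigma_sym) => sign_c.
set a := walk_sign sigma r (p x) in sign_c *; set b := walk_sign sigma r (p y) in sign_c *.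
have -> : sigma x y = sigma x y * (a ^+ 2 * b ^+ 2).
  by rewrite !(walk_sign_sqr sigma_sqr) !mulr1.
by rewrite -[RHS]mul1r -{1}sign_c; ring.
Qed.

End Balance.

Section PositiveDefinite.

Variable R : realFieldType.

Definition posdef n (M : 'M[R]_n) :=
  forall u : 'rV[R]_n, u != 0 -> 0 < (u *m M *m u^T) 0 0.

Lemma qformE n (M : 'M[R]_n) (u : 'rV[R]_n) :
  (u *m M *m u^T) 0 0 = \sum_i \sum_j u 0 i * u 0 j * M i j.
Proof.
rewrite mxE; under eq_bigr => j _ do rewrite !mxE mulr_suml.
by rewrite exchange_big; apply: eq_bigr => i _; apply: eq_bigr => j _; ring.
Qed.

Lemma posdef1 n : posdef (1%:M : 'M[R]_n).
Proof.
move=> u u_neq0; rewrite mulmx1 mxE.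
have sqr_ge0 k : 0 <= u 0 k * u^T k 0 by rewrite mxE -expr2 sqr_ge0.
rewrite lt_def sumr_ge0 // andbT; apply: contra u_neq0 => /eqP /psumr_eq0P u0.
apply/eqP/rowP => k; have /eqP := u0 (fun k _ => sqr_ge0 k) k isT.
by rewrite !mxE mulf_eq0 orbb => /eqP.
Qed.

Lemma posdef_mulmx m n (M : 'M[R]_n) (P : 'M[R]_(m, n)) :
  row_free P -> posdef M -> posdef (P *m M *m P^T).
Proof.
move=> P_free M_pd u u_neq0.
have -> : u *m (P *m M *m P^T) *m u^T = (u *m P) *m M *m (u *m P)^T.
  by rewrite trmx_mul !mulmxA.
apply: M_pd; apply: contra u_neq0 => /eqP uP0.
by apply/eqP/(row_free_inj P_free); rewrite mul0mx.
Qed.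

Lemma posdef_gram m n (F : 'M[R]_(m, n)) : row_free F -> posdef (F *m F^T).
Proof. by move=> F_free; have := posdef_mulmx F_free (@posdef1 n); rewrite mulmx1. Qed.

Lemma posdef_mxsub m n (v : 'I_m -> 'I_n) (M : 'M[R]_n) :
  injective v -> posdef M -> posdef (mxsub v v M).
Proof.
move=> v_inj M_pd; set P := rowsub v (1%:M : 'M[R]_n).
have mxsubE (A : 'M[R]_n) : mxsub v v A = P *m A *m P^T.
  by rewrite mul_rowsub_mx mul1mx trmx_mxsub trmx1 mulmx_colsub mulmx1 -mxsubcr.
have P_free : row_free P.
  apply/row_freeP; exists P^T; have := mxsubE 1%:M; rewrite mulmx1 => <-.
  by apply/matrixP => s t; rewrite !mxE (inj_eq v_inj).
by rewrite mxsubE; apply: posdef_mulmx.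
Qed.

End PositiveDefinite.

Section CyclicPattern.

Variables (R : realFieldType) (L : nat) (M : 'M[R]_L).
Hypotheses (L_gt2 : (2 < L)%N) (M_sym : M^T = M) (M_diag : forall s, M s s = 1).
Hypothesis M_supp : forall s t, M s t != 0 -> [|| t == s, t == ordS s | s == ordS t].
Hypothesis M_gap : forall s, 1 / 4 <= M s (ordS s) ^+ 2.

Let a s := M s (ordS s).

Let cyclic_entry s t :
  M s t = (t == s)%:R + a s * (t == ordS s)%:R + a t * (s == ordS t)%:R.
Proof.
have S_neq (s' : 'I_L) : (ordS s' == s') = false := negbTE (ordS_neq s' (ltnW L_gt2)).
have S2_neq (s' : 'I_L) : (s' == ordS (ordS s')) = false.
  by rewrite eq_sym; exact: negbTE (ordS2_neq s' L_gt2).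
have [->|t_neq_s] := eqVneq t s; first by rewrite M_diag eq_sym S_neq !mulr0 !addr0.
have [->|t_neq_Ss] := eqVneq t (ordS s); first by rewrite S2_neq mulr0 mulr1 add0r addr0.
have [->|s_neq_St] := eqVneq s (ordS t).
  by rewrite -[in LHS]M_sym mxE mulr0 mulr1 !add0r.
have := @M_supp s t; rewrite (negPf t_neq_s) (negPf t_neq_Ss) (negPf s_neq_St).
by move/contraNeq/(_ isT) ->; rewrite !mulr0 !addr0.
Qed.

Hypothesis M_sg_prod : \prod_s Num.sg (M s (ordS s)) = (-1) ^+ L.

Let y : 'rV[R]_L := \row_s \prod_(t < L | (t < s)%N) - Num.sg (a t).

Let a_neq0 s : a s != 0.
Proof. by apply: contraTneq (M_gap s); rewrite /a => ->; rewrite expr0n /= -ltNge; lra. Qed.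

Let y_sqr s : y 0 s ^+ 2 = 1.
Proof. by rewrite mxE -prodrXl big1 // => t _; rewrite sqrrN sqr_sg a_neq0. Qed.

Let y_ordS s : y 0 (ordS s) = - y 0 s * Num.sg (a s).
Proof.
have y_succ : \prod_(t < L | (t < s.+1)%N) - Num.sg (a t) = - y 0 s * Num.sg (a s).
  rewrite (bigD1 s) //= mxE mulrC mulrN mulNr; congr (- (_ * _)).
  by apply: eq_bigl => t; rewrite ltnS ltn_neqAle andbC.
rewrite mxE ordS_val; case: eqP => [s_last|_]; last exact: y_succ.
rewrite big_pred0 // -y_succ s_last (eq_bigl xpredT) => [|t]; last exact: ltn_ord.
rewrite (eq_bigr (fun t => -1 * Num.sg (a t))) => [|t _]; last by rewrite mulN1r.
by rewrite big_split /= prodr_const card_ord [\prod_s _]M_sg_prod -exprMn mulrNN mulr1 expr1n.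
Qed.

Let y_a s : y 0 s * y 0 (ordS s) * a s = - `|a s|.
Proof. by rewrite y_ordS normrEsg -[RHS]mul1r -(y_sqr s); ring. Qed.

Let qform_y : (y *m M *m y^T) 0 0 = \sum_s (1 - 2 * `|a s|).
Proof.
have pick (b : 'I_L) (F : 'I_L -> R) : \sum_t F t * (t == b)%:R = F b.
  by rewrite (bigD1 b) //= eqxx mulr1 big1 ?addr0 // => t /negPf ->; rewrite mulr0.
rewrite qformE.
under eq_bigr => s _ do under eq_bigr => t _ do rewrite cyclic_entry !mulrDr !mulrA.
under eq_bigr => s _ do rewrite !big_split /= !pick.
rewrite !big_split /= exchange_big /=.
under [X in _ + _ + X]eq_bigr => t _ do rewrite pick.
rewrite -!big_split /=; apply: eq_bigr => s _.
by rewrite -expr2 y_sqr [y 0 (ordS s) * _]mulrC y_a; ring.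
Qed.

Lemma cyclic_not_posdef : ~ posdef M.
Proof.
move=> M_pd; have s0 : 'I_L := Ordinal (ltn_trans (isT : 1 < 2)%N L_gt2).
have y_neq0 : y != 0.
  apply/eqP => y0; have := y_sqr s0; rewrite y0 mxE expr0n /=.
  by move/esym/eqP; rewrite oner_eq0.
have := M_pd y y_neq0; rewrite qform_y ltNge => /negP; apply.
apply: sumr_le0 => s _; have := M_gap s; rewrite -/(a s) -real_normK ?num_real //.
have := normr_ge0 (a s); move: `|a s| => x; nra.
Qed.

End CyclicPattern.

Section GramSwitching.

Variables (R : realFieldType) (n : nat) (A B : 'M[R]_n).
Hypotheses (A_sym : A^T = A) (B_sym : B^T = B).
Hypotheses (A_diag : forall i, A i i = 1) (B_diag : forall i, B i i = 1).
Hypotheses (A_pd : posdef A) (B_pd : posdef B).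
Hypothesis AB_sqr : forall i j, A i j ^+ 2 = B i j ^+ 2.
Hypothesis A_gap : forall i j, i != j -> A i j != 0 -> 1 / 4 <= A i j ^+ 2.

Let adj : rel 'I_n := fun i j => (i != j) && (A i j != 0).
Let sgn i j : R := if A i j == B i j then 1 else -1.

Let A_symE i j : A i j = A j i. Proof. by rewrite -[in LHS]A_sym mxE. Qed.
Let B_symE i j : B i j = B j i. Proof. by rewrite -[in LHS]B_sym mxE. Qed.

Let adj_sym : symmetric adj.
Proof. by move=> i j; rewrite /adj eq_sym A_symE. Qed.

Let adj_irr : irreflexive adj.
Proof. by move=> i; rewrite /adj eqxx. Qed.

Let sgn_sym i j : sgn i j = sgn j i.
Proof. by rewrite /sgn A_symE B_symE. Qed.

Let sgn_sqr i j : sgn i j ^+ 2 = 1.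
Proof. by rewrite /sgn; case: ifP; rewrite ?sqrrN expr1n. Qed.

Let A_sgn i j : A i j = sgn i j * B i j.
Proof.
rewrite /sgn; case: eqP => [->|/eqP A_neq_B]; first by rewrite mul1r.
by move/eqP: (AB_sqr i j); rewrite eqf_sqr (negPf A_neq_B) mulN1r => /eqP.
Qed.

Let induced_cycle_adj L (v : 'I_L -> 'I_n) s : induced_cycle adj v ->
  adj (v s) (v (ordS s)).
Proof. by case=> _ v_adj; rewrite v_adj eqxx. Qed.

Let induced_cycle_sg_prod L (v : 'I_L -> 'I_n) (M : 'M[R]_n) :
  (2 < L)%N -> induced_cycle adj v ->
  M^T = M -> (forall i, M i i = 1) -> posdef M -> (forall i j, M i j ^+ 2 = A i j ^+ 2) ->
  \prod_s Num.sg (M (v s) (v (ordS s))) != (-1) ^+ L.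
Proof.
move=> L_gt2 v_cyc M_sym M_diag M_pd M_sqr; apply/eqP => M_prod; case: (v_cyc) => v_inj v_adj.
apply: (cyclic_not_posdef (M := mxsub v v M)) L_gt2 _ _ _ _ _ (posdef_mxsub v_inj M_pd).
- by rewrite trmx_mxsub M_sym.
- by move=> s; rewrite mxE.
- move=> s t; rewrite mxE -sqrf_eq0 M_sqr sqrf_eq0 => A_neq0.
  by have [//|t_neq_s] := eqVneq t s; rewrite -v_adj /adj (inj_eq v_inj) eq_sym t_neq_s.
- move=> s; rewrite mxE M_sqr.
  by have /andP[] := induced_cycle_adj s v_cyc; apply: A_gap.
- by rewrite -M_prod; apply: eq_bigr => s _; rewrite mxE.
Qed.

Let induced_cycle_sgn L (v : 'I_L -> 'I_n) : (2 < L)%N -> induced_cycle adj v ->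
  \prod_s sgn (v s) (v (ordS s)) = 1.
Proof.
move=> L_gt2 v_cyc.
have := induced_cycle_sg_prod L_gt2 v_cyc A_sym A_diag A_pd (fun _ _ => erefl).
have := induced_cycle_sg_prod L_gt2 v_cyc B_sym B_diag B_pd (fun i j => esym (AB_sqr i j)).
set PA := \prod_s Num.sg (A _ _); set PB := \prod_s Num.sg (B _ _) => PB_neq PA_neq.
have PA_sgn : PA = \prod_s sgn (v s) (v (ordS s)) * PB.
  rewrite /PA -big_split; apply: eq_bigr => s _ /=.
  by rewrite A_sgn sgrM /sgn; case: ifP; rewrite ?sgr1 ?sgrN1.
have PA_sqr : PA ^+ 2 = 1.
  rewrite -prodrXl big1 // => s _; rewrite sqr_sg.
  by have /andP[_ ->] := induced_cycle_adj s v_cyc.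
have /eqP : (\prod_s sgn (v s) (v (ordS s))) ^+ 2 = 1.
  by rewrite -prodrXl big1 // => s _; apply: sgn_sqr.
rewrite sqrf_eq1 => /orP[/eqP //|/eqP sgn_neg].
have PB_eq : PB = - PA by rewrite PA_sgn sgn_neg mulN1r opprK.
have /eqP : PA ^+ 2 = ((-1) ^+ L) ^+ 2 by rewrite PA_sqr -exprM mulnC exprM sqrrN !expr1n.
rewrite eqf_sqr => /orP[/eqP PA_eq | /eqP PA_eq]; first by rewrite PA_eq eqxx in PA_neq.
by rewrite PB_eq PA_eq opprK eqxx in PB_neq.
Qed.

Lemma gram_switching : exists eps : 'I_n -> R, (forall i, eps i = 1 \/ eps i = -1) /\
  A = diag_mx (\row_i eps i) *m B *m diag_mx (\row_i eps i).
Proof.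
have [eps [eps_sqr sgn_eps]] :=
  balanced_switching adj_sym adj_irr sgn_sym sgn_sqr induced_cycle_sgn.
exists eps; split=> [i|].
  by move/eqP: (eps_sqr i); rewrite sqrf_eq1 => /orP[]/eqP; [left|right].
apply/matrixP => i j; rewrite mul_mx_diag mul_diag_mx !mxE.
have [<-|i_neq_j] := eqVneq i j; first by rewrite A_diag B_diag mulr1 -expr2 eps_sqr.
have [A0|A_neq0] := eqVneq (A i j) 0.
  move/eqP: (AB_sqr i j); rewrite A0 expr0n eq_sym sqrf_eq0 => /eqP ->.
  by rewrite mulr0 mul0r.
rewrite A_sgn sgn_eps; first by rewrite mulrAC.
by rewrite /adj i_neq_j A_neq0.
Qed.

End GramSwitching.

Section SimplexGram.

Variable R : realType.

Lemma dotpE m (u v : 'rV[R]_m) : dotp u v = \sum_k u 0 k * v 0 k.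
Proof. by rewrite /dotp mxE; apply: eq_bigr => k _; rewrite mxE. Qed.

Lemma gram_entry m n (F : 'M[R]_(m, n)) i j : (F *m F^T) i j = dotp (row i F) (row j F).
Proof. by rewrite dotpE mxE; apply: eq_bigr => k _; rewrite !mxE. Qed.

Lemma dotp_unit_bound m (u v : 'rV[R]_m) :
  dotp u u = 1 -> dotp v v = 1 -> -1 <= dotp u v <= 1.
Proof.
rewrite !dotpE => u_unit v_unit.
have sum_sqr (c : R) : 0 <= \sum_k (u 0 k + c * v 0 k) ^+ 2.
  by apply: sumr_ge0 => k _; apply: sqr_ge0.
have expand (c : R) : \sum_k (u 0 k + c * v 0 k) ^+ 2 =
    \sum_k u 0 k * u 0 k + 2 * c * \sum_k u 0 k * v 0 k + c ^+ 2 * \sum_k v 0 k * v 0 k.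
  by rewrite !mulr_sumr -!big_split; apply: eq_bigr => k _ /=; ring.
have := sum_sqr 1; have := sum_sqr (-1); rewrite !expand u_unit v_unit => h1 h2.
by apply/andP; split; nra.
Qed.

Lemma cos_piB (x : R) : cos (pi - x) = - cos x.
Proof. by rewrite cosB cospi sinpi mul0r addr0 mulN1r. Qed.

Lemma cos_pi3 : cos (pi / 3 : R) = 1 / 2.
Proof.
have cos_gt0 : 0 < cos (pi / 3 : R).
  by apply: cos_gt0_pihalf; have := pi_gt0 R => pi_gt0; apply/andP; split; lra.
have := cos_mulr2n (pi / 3 : R).
have -> : (pi / 3 : R) *+ 2 = pi - pi / 3 by rewrite mulr2n; field.
rewrite cos_piB mulr2n expr2 => h; nra.
Qed.

Lemma cos_pi4_sqr : cos (pi / 4 : R) ^+ 2 = 1 / 2.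
Proof.
have := cos_mulr2n (pi / 4 : R).
have -> : (pi / 4 : R) *+ 2 = pi / 2 by rewrite mulr2n; field.
rewrite cos_pihalf mulr2n => h; lra.
Qed.

Lemma dotp_normals n (f : 'I_n.+1 -> 'rV[R]_n.+1) i j : simplex_normals f ->
  dotp (f i) (f j) = - cos (dihedral f i j).
Proof.
by case=> f_unit _; rewrite /dihedral cos_piB acosK ?opprK // in_itv /= dotp_unit_bound.
Qed.

Lemma admissible_dotp_gap n (f : 'I_n.+1 -> 'rV[R]_n.+1) i j :
  simplex_normals f -> admissible_angles f -> i != j -> dotp (f i) (f j) != 0 ->
  1 / 4 <= dotp (f i) (f j) ^+ 2.
Proof.
move=> f_simp f_adm i_neq_j; rewrite dotp_normals // sqrrN oppr_eq0.
have obtuse_pi3 : 2 * pi / 3 = pi - pi / 3 :> R by field.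
have obtuse_pi4 : 3 * pi / 4 = pi - pi / 4 :> R by field.
by case: (f_adm i j i_neq_j) => /= [->|[->|[->|[->|->]]]];
  rewrite ?obtuse_pi3 ?obtuse_pi4 ?cos_piB ?sqrrN ?cos_pihalf ?eqxx ?cos_pi3 ?cos_pi4_sqr;
  lra.
Qed.

Lemma family_diagram_dotp_sqr n (f : 'I_n.+1 -> 'rV[R]_n.+1) Gamma i j :
  simplex_normals f -> is_family_diagram f Gamma -> i != j ->
  dotp (f i) (f j) ^+ 2 = cos (pi / (Gamma i j).+2%:R) ^+ 2.
Proof.
move=> f_simp f_diag i_neq_j; have [k [k_ge2 [angle ->]]] := f_diag i j i_neq_j.
have -> : (k - 2).+2 = k by lia.
rewrite dotp_normals // sqrrN; case: angle => -> //.
have k_gt0 : (0 : R) < k%:R by rewrite ltr0n; lia.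
have -> : pi * k.-1%:R / k%:R = pi - pi / k%:R :> R.
  by rewrite -subn1 natrB; [field; lra | lia].
by rewrite cos_piB sqrrN.
Qed.

Lemma simplex_gram_switching n Gamma (f g : 'I_n.+1 -> 'rV[R]_n.+1) :
  simplex_normals f -> simplex_normals g ->
  admissible_angles f -> admissible_angles g ->
  is_family_diagram f Gamma -> is_family_diagram g Gamma ->
  let F := \matrix_i f i in let G := \matrix_i g i in
  exists eps : 'I_n.+1 -> R, (forall i, eps i = 1 \/ eps i = -1) /\
    F *m F^T = diag_mx (\row_i eps i) *m (G *m G^T) *m diag_mx (\row_i eps i).
Proof.
move=> f_simp g_simp f_adm g_adm f_diag g_diag F G.
have gramF i j : (F *m F^T) i j = dotp (f i) (f j) by rewrite gram_entry !rowK.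
have gramG i j : (G *m G^T) i j = dotp (g i) (g j) by rewrite gram_entry !rowK.
apply: gram_switching; rewrite ?trmx_mul ?trmxK //.
- by move=> i; rewrite gramF; case: f_simp.
- by move=> i; rewrite gramG; case: g_simp.
- by apply: posdef_gram; case: f_simp.
- by apply: posdef_gram; case: g_simp.
- move=> i j; rewrite gramF gramG; have [<-|i_neq_j] := eqVneq i j.
    by case: f_simp => -> _; case: g_simp => -> _.
  by rewrite (family_diagram_dotp_sqr f_simp f_diag) ?(family_diagram_dotp_sqr g_simp g_diag).
- by move=> i j; rewrite gramF; apply: admissible_dotp_gap.
Qed.

End SimplexGram.

Lemma gram_eq_orthogonal (R : comUnitRingType) n (F H : 'M[R]_n) :
  F \in unitmx -> F *m F^T = H *m H^T ->
  (invmx F *m H) *m (invmx F *m H)^T = 1%:M.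
Proof.
move=> F_unit FH; rewrite trmx_mul mulmxA -[_ *m H *m H^T]mulmxA -FH.
by rewrite !mulmxA mulVmx // mul1mx -trmx_mul mulVmx // trmx1.
Qed.

Theorem lemma2 (R : realType) (n : nat) (Gamma : 'I_n.+1 -> 'I_n.+1 -> nat)
  (f g : 'I_n.+1 -> 'rV[R]_n.+1) :
  simplex_normals f -> simplex_normals g ->
  admissible_angles f -> admissible_angles g ->
  is_family_diagram f Gamma -> is_family_diagram g Gamma ->
  exists (Q : 'M[R]_n.+1) (eps : 'I_n.+1 -> R),
    Q *m Q^T = 1%:M /\
    (forall i, eps i = 1 \/ eps i = -1) /\
    (forall i, f i *m Q = eps i *: g i).
Proof.
move=> f_simp g_simp f_adm g_adm f_diag g_diag.
have [eps [eps_pm FG]] := simplex_gram_switching f_simp g_simp f_adm g_adm f_diag g_diag.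
set F := \matrix_i f i in FG; set G := \matrix_i g i in FG; set D := diag_mx _ in FG.
have F_unit : F \in unitmx by rewrite -row_free_unit; case: f_simp.
exists (invmx F *m (D *m G)), eps; split; [|split] => //.
  by apply: gram_eq_orthogonal; rewrite // FG trmx_mul /D tr_diag_mx !mulmxA.
move=> i; rewrite -[f i](rowK f) -/F -row_mul mulmxA mulmxV // mul1mx.
by rewrite row_mul row_diag_mx -scalemxAl -rowE rowK mxE.
Qed.
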